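(* Let $\mathcal{X}$ be a nonempty finite set, let $k$ be a strong kernel on $\mathcal{X}$, and let $(T,w)$ be a hierarchy on $\mathcal{X}$ inducing $k$. Let $n\in\mathbb{N}$ and let $X,Y\subseteq\mathcal{X}$ with $|X|=|Y|=n$. Then $$K^k_{\mathfrak{B}}(X,Y)=\sum_{v\in V(T)}\omega(v)\cdot\min\{|X_v|,|Y_v|\}=K_{\sqcap}\big(H^k(X),H^k(Y)\big).$$
   Context: A rooted tree is a finite tree $T$ with a distinguished root vertex $r$. For a vertex $v$, its parent $p(v)$ is the vertex following $v$ on the unique path from $v$ to $r$, with the convention $p(r)=r$. The ancestors of $v$ are the vertices on the path from $v$ to $r$ (including $v$ and $r$); the depth of $v$ is the number of edges on this path. The lowest common ancestor $\mathrm{LCA}(u,v)$ is the unique vertex of maximum depth that is an ancestor of both $u$ and $v$. A hierarchy on a set $\mathcal{X}$ is a pair $(T,w)$ where $T$ is a rooted tree whose set of leaves is exactly $\mathcal{X}$, and $w:V(T)\to\mathbb{R}_{\ge 0}$ satisfies $w(v)\ge w(p(v))$ for all $v\in V(T)$. The kernel induced by $(T,w)$ is $k(x,y)=w(\mathrm{LCA}(x,y))$ for $x,y\in\mathcal{X}$. A strong kernel on a set $\mathcal{X}$ is a symmetric function $k:\mathcal{X}\times\mathcal{X}\to\mathbb{R}_{\ge 0}$ such that $k(x,y)\ge\min\{k(x,z),k(z,y)\}$ for all $x,y,z\in\mathcal{X}$. Given a hierarchy $(T,w)$ with root $r$, the additive weight $\omega:V(T)\to\mathbb{R}_{\ge0}$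 is $\omega(v)=w(v)-w(p(v))$ for $v\ne r$ and $\omega(r)=w(r)$. For $X\subseteq\mathcal{X}$ and $v\in V(T)$, $X_v$ denotes the set of elements of $X$ that are leaves of the subtree of $T$ rooted at $v$ (i.e. elements of $X$ having $v$ as an ancestor). The histogram of $X$ is the vector $H^k(X)\in\mathbb{R}^{V(T)}$ with $[H^k(X)]_v=\omega(v)\cdot|X_v|$. The histogram intersection kernel on $\mathbb{R}^t$ is $K_\sqcap(g,h)=\sum_{i=1}^t\min\{g_i,h_i\}$. For $X,Y$ of equal cardinality, $\mathfrak{B}(X,Y)$ is the set of all bijections between $X$ and $Y$ (viewed as sets of pairs $(x,y)$), and the optimal assignment kernel is $K^k_{\mathfrak{B}}(X,Y)=\max_{B\in\mathfrak{B}(X,Y)}\sum_{(x,y)\in B}k(x,y)$. *)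

From HB Require Import structures.
From mathcomp Require Import all_boot all_order all_algebra.
Set Implicit Arguments. Unset Strict Implicit. Unset Printing Implicit Defensive.
Import Order.TTheory GRing.Theory Num.Theory.
Local Open Scope ring_scope.

Section Defs.
Variable V : finType.
Variable p : V -> V. (* parent function *)
Variable r : V.

Definition rooted_tree : Prop :=
  p r = r /\ forall v : V, exists m : nat, iter m p v = r.

Definition ancestor (u v : V) : bool :=
  [exists i : 'I_#|V|.+1, iter i p v == u].

(* depth = number of edges on the path from v to r
   = (number of vertices on that path) - 1 *)
Definition depth (v : V) : nat := #|[set u | ancestor u v]|.-1.

Definition is_lca (u a b : V) : Prop :=
  [/\ ancestor u a, ancestor u b &
      forall c, ancestor c a -> ancestor c b -> (depth c <= depth u)%N].

Definition leaf (v : V) : bool := [forall u, (p u == v) ==> (u == v)].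

Variable R : realFieldType.
Variable w : V -> R.

Definition weight_ok : Prop := forall v, 0 <= w v /\ w (p v) <= w v.

Definition omega (v : V) : R := if v == r then w r else w v - w (p v).

Variable Xt : finType.
Variable f : Xt -> V. (* identification of the ground set with the leaves *)

Definition leaves_are : Prop :=
  injective f /\ forall v : V, leaf v <-> exists x : Xt, f x = v.

Definition induces (k : Xt -> Xt -> R) : Prop :=
  forall x y u, is_lca u (f x) (f y) -> k x y = w u.

Definition subX (X : {set Xt}) (v : V) : {set Xt} :=
  [set x in X | ancestor v (f x)].

Definition histogram (X : {set Xt}) : {ffun V -> R} :=
  [ffun v => omega v * (#|subX X v|)%:R].

End Defs.

Definition Kcap (I : finType) (R : realFieldType) (g h : {ffun I -> R}) : R :=
  \sum_(i : I) Num.min (g i) (h i).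

Definition strong_kernel (Xt : finType) (R : realFieldType)
    (k : Xt -> Xt -> R) : Prop :=
  (forall x y, k x y = k y x) /\ (forall x y, 0 <= k x y) /\
  (forall x y z, Num.min (k x z) (k z y) <= k x y).

(* B is a bijection between X and Y, viewed as a set of pairs *)
Definition is_bij (Xt : finType) (X Y : {set Xt}) (B : {set Xt * Xt}) : bool :=
  [&& B \subset setX X Y,
      [forall x in X, #|[set b in B | b.1 == x]| == 1%N] &
      [forall y in Y, #|[set b in B | b.2 == y]| == 1%N]].

(* optimal assignment kernel; the max is taken with initial value 0,
   harmless since kernel values are nonnegative and the bijection set is
   nonempty when |X| = |Y| *)
Definition KB (Xt : finType) (R : realFieldType) (k : Xt -> Xt -> R)
    (X Y : {set Xt}) : R :=
  \big[Num.max/0]_(B : {set Xt * Xt} | is_bij X Y B) \sum_(b in B) k b.1 b.2.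

From HB Require Import structures.
From mathcomp Require Import all_boot all_order all_algebra.
From mathcomp Require Import zify.
Set Implicit Arguments.
Unset Strict Implicit.
Unset Printing Implicit Defensive.

Import Order.TTheory GRing.Theory Num.Theory.
Local Open Scope ring_scope.

(** Telescoping the additive weights along the path to the root gives
    k(x,y) = w(LCA(x,y)) = sum of omega(v) over the common ancestors v of x
    and y.  Hence a bijection B is worth the sum over v of omega(v) times the
    number of pairs of B lying below v, and that number is at most
    min(|X_v|, |Y_v|).  Greedily matching a pair (x,y) with the most common
    ancestors (a deepest LCA) and recursing attains this bound at every vertex
    at once: if v lies above x but not above y, then no other element of Y lies
    below v, since it would share strictly more ancestors with x. *)

Section Bijections.
Variable T : finType.

Lemma card_le_inj_on (U : finType) (A : {set U}) (S : {set T}) (g : U -> T) :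
  {in A &, injective g} -> {in A, forall a, g a \in S} -> (#|A| <= #|S|)%N.
Proof.
move=> g_inj gAS; rewrite -(card_in_imset g_inj).
by apply/subset_leq_card/subsetP => _ /imsetP[a aA ->]; exact: gAS.
Qed.

Definition unique_fibres (U : finType) (g : U -> T) (B : {set U}) (X : {set T}) :=
  [forall x in X, #|[set b in B | g b == x]| == 1%N].

Lemma unique_fibres_inj (U : finType) (g : U -> T) (B : {set U}) (X : {set T}) :
  {in B, forall b, g b \in X} -> unique_fibres g B X -> {in B &, injective g}.
Proof.
move=> gBX /forallP fib b1 b2 b1B b2B eq_g.
have /cards1P[z fibre_z] := implyP (fib (g b1)) (gBX _ b1B).
have : b1 \in [set b in B | g b == g b1] by rewrite inE b1B eqxx.
have : b2 \in [set b in B | g b == g b1] by rewrite inE b2B eq_g eqxx.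
by rewrite fibre_z !inE => /eqP -> /eqP ->.
Qed.

Lemma unique_fibres_setU1 (U : finType) (g : U -> T) (B : {set U})
    (X : {set T}) b0 :
  {in B, forall b, g b \in X :\ g b0} -> unique_fibres g B (X :\ g b0) ->
  unique_fibres g (b0 |: B) X.
Proof.
move=> gB /forallP fib; apply/forallP => x; apply/implyP => xX; apply/cards1P.
have [<-|neq_x] := eqVneq (g b0) x.
  exists b0; apply/setP => b; rewrite !inE.
  have [->|_] := eqVneq b b0; first by rewrite eqxx.
  apply/negbTE/andP => -[bB /eqP eq_gb].
  by move: (gB b bB); rewrite eq_gb !inE eqxx.
have xX' : x \in X :\ g b0 by rewrite !inE eq_sym neq_x.
have /cards1P[z fibre_z] := implyP (fib x) xX'.
exists z; rewrite -fibre_z; apply/setP => b; rewrite !inE.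
by have [->|] := eqVneq b b0; rewrite ?(negbTE neq_x) ?andbF.
Qed.

Lemma is_bij0 : is_bij (set0 : {set T}) set0 set0.
Proof.
by apply/and3P; split; [exact: sub0set | |]; apply/forallP => x; rewrite inE.
Qed.

Lemma is_bij_setU1 (X Y : {set T}) (B : {set T * T}) x y : x \in X -> y \in Y ->
  is_bij (X :\ x) (Y :\ y) B -> is_bij X Y ((x, y) |: B).
Proof.
move=> xX yY /and3P[sub_B fib1 fib2].
have B_XY b : b \in B -> b.1 \in X :\ x /\ b.2 \in Y :\ y.
  by move=> /(subsetP sub_B); rewrite inE => /andP.
apply/and3P; split.
- apply/subsetP => b; rewrite in_setU1 => /predU1P[-> | /B_XY[]].
    by rewrite inE xX yY.
  by rewrite !inE => /andP[_ ->] /andP[_ ->].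
- by apply: (unique_fibres_setU1 (g := fst)) => // b /B_XY[].
- by apply: (unique_fibres_setU1 (g := snd)) => // b /B_XY[].
Qed.

End Bijections.

Section RootedTree.
Variables (V : finType) (p : V -> V) (r : V).

Lemma ancestorE u v : ancestor p u v = fconnect p v u.
Proof.
apply/existsP/idP => [[i /eqP <-]|vu]; first exact: fconnect_iter.
have lt_idx : (findex p v u < #|V|.+1)%N.
  exact: leq_trans (findex_max vu) (leqW (max_card _)).
by exists (Ordinal lt_idx); rewrite iter_findex.
Qed.

Lemma ancestorP u v : reflect (exists i, iter i p v = u) (ancestor p u v).
Proof.
rewrite ancestorE; apply: (iffP idP) => [vu|[i <-]]; last exact: fconnect_iter.
by exists (findex p v u); exact: iter_findex.
Qed.

Lemma ancestor_refl v : ancestor p v v.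
Proof. by apply/ancestorP; exists 0%N. Qed.

Lemma ancestor_trans a b c : ancestor p a b -> ancestor p b c -> ancestor p a c.
Proof.
move=> /ancestorP[i <-] /ancestorP[j <-]; apply/ancestorP.
by exists (i + j)%N; rewrite iterD.
Qed.

Lemma ancestor_total a b c :
  ancestor p a c -> ancestor p b c -> ancestor p a b || ancestor p b a.
Proof.
move=> /ancestorP[i <-] /ancestorP[j <-]; apply/orP.
have [le_ij|lt_ji] := leqP i j.
  by right; apply/ancestorP; exists (j - i)%N; rewrite -iterD subnK.
by left; apply/ancestorP; exists (i - j)%N; rewrite -iterD subnK // ltnW.
Qed.

Lemma ancestor_parent u v : ancestor p u v = (u == v) || ancestor p u (p v).
Proof.
apply/ancestorP/orP => [[[|i] hi]|[/eqP->|/ancestorP[i hi]]].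
- by left; apply/eqP; rewrite -hi.
- by right; apply/ancestorP; exists i; rewrite -iterSr.
- by exists 0%N.
- by exists i.+1; rewrite iterSr.
Qed.

Definition common_anc (a b : V) : {set V} :=
  [set c | ancestor p c a && ancestor p c b].

Lemma common_ancC a b : common_anc a b = common_anc b a.
Proof. by apply/setP => c; rewrite !inE andbC. Qed.

Lemma common_anc_lt a b b' v : ancestor p v a -> ~~ ancestor p v b ->
  ancestor p v b' -> (#|common_anc a b| < #|common_anc a b'|)%N.
Proof.
move=> va nvb vb'; apply/proper_card/properP; split.
  apply/subsetP => c; rewrite !inE => /andP[ca cb]; rewrite ca.
  case/orP: (ancestor_total ca va) => [cv|vc]; first exact: ancestor_trans cv vb'.
  by rewrite (ancestor_trans vc cb) in nvb.
by exists v; rewrite !inE va ?vb' ?(negbTE nvb).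
Qed.

Hypothesis htree : rooted_tree p r.

Lemma iter_root m : iter m p r = r.
Proof. by apply: iter_fix; case: htree. Qed.

Lemma ancestor_root v : ancestor p r v.
Proof. by case: htree => _ /(_ v)[m hm]; apply/ancestorP; exists m. Qed.

Lemma ancestor_antisym a b : ancestor p a b -> ancestor p b a -> a = b.
Proof.
move=> /ancestorP[i hi] /ancestorP[j hj]; have [_ /(_ b)[m hm]] := htree.
have periodic t : iter (t * (j + i)) p b = b.
  by elim: t => // t IH; rewrite mulSn iterD IH iterD hi hj.
have [ji0|ji_gt0] := posnP (j + i).
  by rewrite -hi (_ : i = 0%N) //; lia.
have b_root : b = r.
  by rewrite -(periodic m) -(subnK (leq_pmulr m ji_gt0)) iterD hm iter_root.
by rewrite -hi b_root iter_root.
Qed.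

Lemma ancestor_of_root v : ancestor p v r = (v == r).
Proof.
by apply/ancestorP/eqP => [[i <-]|->]; [exact: iter_root | exists 0%N].
Qed.

Lemma depth_lt u c : ancestor p u c -> u != c -> (depth p u < depth p c)%N.
Proof.
move=> uc neq_uc; rewrite /depth.
have : [set x | ancestor p x u] \proper [set x | ancestor p x c].
  apply/properP; split.
    by apply/subsetP => x; rewrite !inE => xu; exact: ancestor_trans xu uc.
  exists c; rewrite !inE ?ancestor_refl //.
  by apply/negP => cu; rewrite (ancestor_antisym uc cu) eqxx in neq_uc.
have : (0 < #|[set x | ancestor p x u]|)%N.
  by apply/card_gt0P; exists u; rewrite inE ancestor_refl.
move=> card_gt0 /proper_card; lia.
Qed.

Lemma common_anc_lca a b :
  exists2 u, is_lca p u a b & common_anc a b = [set c | ancestor p c u].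
Proof.
have r_common : ancestor p r a && ancestor p r b by rewrite !ancestor_root.
have [u /andP[ua ub] deepest] :=
  @arg_maxnP _ r [pred c | ancestor p c a && ancestor p c b] (depth p) r_common.
exists u; first by split => // c ca cb; apply: deepest; rewrite /= ca cb.
apply/setP => c; rewrite !inE; apply/idP/idP => [/andP[ca cb]|cu].
  case/orP: (ancestor_total ca ua) => // uc.
  have [<-|neq_uc] := eqVneq u c; first exact: ancestor_refl.
  have := deepest c; rewrite /= ca cb => /(_ isT).
  by rewrite leqNgt (depth_lt uc neq_uc).
by rewrite (ancestor_trans cu ua) (ancestor_trans cu ub).
Qed.

Variables (R : realFieldType) (w : V -> R).

Lemma w_sum_omega u : w u = \sum_(v | ancestor p v u) omega p r w v.
Proof.
have sum_root : w r = \sum_(v | ancestor p v r) omega p r w v.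
  rewrite (eq_bigl (pred1 r)) => [|v]; last exact: ancestor_of_root.
  by rewrite big_pred1_eq /omega eqxx.
have [_ /(_ u)[m]] := htree.
elim: m u => [u /= -> //|m IH u hm].
have [-> //|neq_ur] := eqVneq u r.
have notin_pu : ~~ ancestor p u (p u).
  apply: (contraNN _ neq_ur) => anc_u_pu.
  have fix_u : p u = u.
    by apply/esym/ancestor_antisym; rewrite // ancestor_parent ancestor_refl orbT.
  by apply/eqP; rewrite -hm iter_fix.
rewrite (bigD1 u) ?ancestor_refl //= (eq_bigl (fun v => ancestor p v (p u))).
  by rewrite -(IH (p u)) -?iterSr // /omega (negbTE neq_ur) subrK.
move=> v; rewrite ancestor_parent.
by case: eqVneq => [->|_] /=; rewrite ?(negbTE notin_pu) ?andbT.
Qed.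

Hypothesis hw : weight_ok p w.

Lemma omega_ge0 v : 0 <= omega p r w v.
Proof.
rewrite /omega; case: eqP => _; first exact: (hw r).1.
by rewrite subr_ge0; exact: (hw v).2.
Qed.

Variables (Xt : finType) (f : Xt -> V) (k : Xt -> Xt -> R).
Hypothesis hind : induces p w f k.

Lemma k_sum_omega x y : k x y = \sum_(v in common_anc (f x) (f y)) omega p r w v.
Proof.
have [u lca_u ->] := common_anc_lca (f x) (f y).
by rewrite (hind lca_u) w_sum_omega; apply: eq_bigl => v; rewrite inE.
Qed.

Definition hist_min_sum (X Y : {set Xt}) : R :=
  \sum_(v : V) omega p r w v * (minn #|subX p f X v| #|subX p f Y v|)%:R.

Lemma card_bij_common_le (X Y : {set Xt}) B v : is_bij X Y B ->
  (#|[set b in B | v \in common_anc (f b.1) (f b.2)]|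
     <= minn #|subX p f X v| #|subX p f Y v|)%N.
Proof.
case/and3P=> sub_B fib1 fib2.
have B_XY b : b \in B -> b.1 \in X /\ b.2 \in Y.
  by move=> /(subsetP sub_B); rewrite inE => /andP.
have sub_A : {subset [set b in B | v \in common_anc (f b.1) (f b.2)] <= B}.
  by move=> b; rewrite inE => /andP[].
have fst_inj : {in B &, injective fst}.
  by apply: (unique_fibres_inj (g := fst)) fib1 => b /B_XY[].
have snd_inj : {in B &, injective snd}.
  by apply: (unique_fibres_inj (g := snd)) fib2 => b /B_XY[].
rewrite leq_min; apply/andP; split.
  apply: (card_le_inj_on (g := fst)) => [b1 b2 /sub_A b1B /sub_A b2B|b].
    exact: fst_inj.
  by rewrite /subX !inE => /andP[/B_XY[-> _]] /andP[-> _].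
apply: (card_le_inj_on (g := snd)) => [b1 b2 /sub_A b1B /sub_A b2B|b].
  exact: snd_inj.
by rewrite /subX !inE => /andP[/B_XY[_ ->]] /andP[_ ->].
Qed.

Lemma bij_sum_le (X Y : {set Xt}) B :
  is_bij X Y B -> \sum_(b in B) k b.1 b.2 <= hist_min_sum X Y.
Proof.
move=> bij_B; under eq_bigr do rewrite k_sum_omega big_mkcond /=.
rewrite exchange_big; apply: ler_sum => v _; rewrite -big_mkcondr /=.
rewrite (eq_bigl (fun b =>
  b \in [set b in B | v \in common_anc (f b.1) (f b.2)])).
  rewrite sumr_const -[X in X <= _]mulr_natr.
  apply: ler_wpM2l; first exact: omega_ge0.
  by rewrite ler_nat card_bij_common_le.
by move=> b; rewrite inE.
Qed.

Lemma card_subX_setD1 (X : {set Xt}) x v : x \in X ->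
  #|subX p f X v| = (ancestor p v (f x) + #|subX p f (X :\ x) v|)%N.
Proof.
move=> xX; rewrite (cardsD1 x (subX p f X v)) /subX inE xX; congr (_ + _)%N.
by apply: eq_card => y; rewrite !inE andbA.
Qed.

Lemma subX_card0_of_deepest (X : {set Xt}) a b v :
  ancestor p v a -> ~~ ancestor p v b ->
  {in X, forall x, #|common_anc a (f x)| <= #|common_anc a b|}%N ->
  #|subX p f X v| = 0%N.
Proof.
move=> va nvb deepest; apply/eqP; rewrite cards_eq0; apply/eqP/setP => x.
rewrite /subX !inE; apply/negbTE/andP => -[xX vx].
by have := deepest x xX; rewrite leqNgt (common_anc_lt va nvb vx).
Qed.

Lemma minn_subX_deepest_pair (X Y : {set Xt}) x y v : x \in X -> y \in Y ->
  {in X & Y, forall x' y',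
     #|common_anc (f x') (f y')| <= #|common_anc (f x) (f y)|}%N ->
  ((v \in common_anc (f x) (f y))
     + minn #|subX p f (X :\ x) v| #|subX p f (Y :\ y) v|)%N
  = minn #|subX p f X v| #|subX p f Y v|.
Proof.
move=> xX yY deepest; rewrite (card_subX_setD1 v xX) (card_subX_setD1 v yY) inE.
case ax: (ancestor p v (f x)); case ay: (ancestor p v (f y)) => /=; try lia.
- suff -> : #|subX p f (Y :\ y) v| = 0%N by lia.
  apply: (subX_card0_of_deepest ax (negbT ay)) => y' /setD1P[_ y'Y].
  exact: deepest.
- suff -> : #|subX p f (X :\ x) v| = 0%N by lia.
  apply: (subX_card0_of_deepest ay (negbT ax)) => x' /setD1P[_ x'X].
  rewrite (common_ancC (f y) (f x')) (common_ancC (f y) (f x)).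
  exact: deepest.
Qed.

Lemma hist_min_sum_deepest_pair (X Y : {set Xt}) x y : x \in X -> y \in Y ->
  {in X & Y, forall x' y',
     #|common_anc (f x') (f y')| <= #|common_anc (f x) (f y)|}%N ->
  k x y + hist_min_sum (X :\ x) (Y :\ y) = hist_min_sum X Y.
Proof.
move=> xX yY deepest; rewrite k_sum_omega big_mkcond -big_split /=.
apply: eq_bigr => v _; rewrite -(minn_subX_deepest_pair v xX yY deepest).
rewrite natrD mulrDr.
by case: (v \in _); rewrite /= ?mulr1 ?mulr0 ?add0r.
Qed.

Lemma exists_optimal_bij n (X Y : {set Xt}) : #|X| = n -> #|Y| = n ->
  exists2 B, is_bij X Y B & \sum_(b in B) k b.1 b.2 = hist_min_sum X Y.
Proof.
elim: n X Y => [|n IH] X Y.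
  move=> /eqP; rewrite cards_eq0 => /eqP -> /eqP; rewrite cards_eq0 => /eqP ->.
  exists set0; first exact: is_bij0.
  rewrite big_set0 /hist_min_sum big1 // => v _.
  have -> : subX p f set0 v = set0 by apply/setP => x; rewrite /subX !inE.
  by rewrite cards0 mulr0.
move=> cardX cardY.
have /card_gt0P[x0 x0X] : (0 < #|X|)%N by rewrite cardX.
have /card_gt0P[y0 y0Y] : (0 < #|Y|)%N by rewrite cardY.
have x0y0 : (x0 \in X) && (y0 \in Y) by rewrite x0X y0Y.
have [[x y] /andP[/= xX yY] deepest] := @arg_maxnP _ (x0, y0)
  [pred b | (b.1 \in X) && (b.2 \in Y)]
  (fun b => #|common_anc (f b.1) (f b.2)|) x0y0.
have cardX' : #|X :\ x| = n by move: cardX; rewrite (cardsD1 x X) xX add1n => -[].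
have cardY' : #|Y :\ y| = n by move: cardY; rewrite (cardsD1 y Y) yY add1n => -[].
have [B bij_B val_B] := IH _ _ cardX' cardY'.
exists ((x, y) |: B); first exact: is_bij_setU1.
have xy_notin_B : (x, y) \notin B.
  have /and3P[sub_B _ _] := bij_B.
  by apply/negP => /(subsetP sub_B); rewrite !inE eqxx.
rewrite big_setU1 //= val_B.
apply: hist_min_sum_deepest_pair => // x' y' x'X y'Y.
by apply: (deepest (x', y')); rewrite /= x'X y'Y.
Qed.

Lemma KB_hist_min_sum (X Y : {set Xt}) :
  #|X| = #|Y| -> KB k X Y = hist_min_sum X Y.
Proof.
move=> cardXY; have [B bij_B val_B] := exists_optimal_bij cardXY (erefl #|Y|).
apply: le_anti; apply/andP; split.
  apply: bigmax_le => [|B' /bij_sum_le //].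
  by apply: sumr_ge0 => v _; rewrite mulr_ge0 ?omega_ge0.
by rewrite -val_B; exact: le_bigmax_cond.
Qed.

Lemma hist_min_sum_Kcap X Y :
  hist_min_sum X Y = Kcap (histogram p r w f X) (histogram p r w f Y).
Proof.
rewrite /hist_min_sum /Kcap; apply: eq_bigr => v _.
by rewrite !ffunE -minr_pMr ?omega_ge0 // -natr_min minEnat.
Qed.

End RootedTree.

(* Nonemptiness of the ground set, strength of k and the description of the
   leaves are not needed: a kernel induced by a hierarchy is automatically
   strong, and the argument never uses that the f x are leaves. *)
Theorem theorem2 (R : realFieldType) (Xt : finType) (hne : (0 < #|Xt|)%N)
    (k : Xt -> Xt -> R) (hk : strong_kernel k)
    (V : finType) (p : V -> V) (r : V) (htree : rooted_tree p r)
    (f : Xt -> V) (hleaves : leaves_are p f)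
    (w : V -> R) (hw : weight_ok p w) (hind : induces p w f k)
    (n : nat) (X Y : {set Xt}) (hX : #|X| = n) (hY : #|Y| = n) :
  KB k X Y = \sum_(v : V) omega p r w v * (minn #|subX p f X v| #|subX p f Y v|)%:R
  /\ \sum_(v : V) omega p r w v * (minn #|subX p f X v| #|subX p f Y v|)%:R
     = Kcap (histogram p r w f X) (histogram p r w f Y).
Proof.
split; first by apply: (KB_hist_min_sum htree hw hind); rewrite hX hY.
exact: (hist_min_sum_Kcap _ hw).
Qed.
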